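(* Let $M(t)\in\mathbb{R}^{n\times n}$ be symmetric and satisfy the Gram flow $\dot M=-(M\Phi+\Phi M)$, where $\Phi(t)$ is symmetric. Suppose that on the time interval considered $M(t)=\sum_e\lambda_e(t)E_e(t)$ is its spectral decomposition, with the eigenvalues $\lambda_e(t)$ remaining distinct (isolated) and the orthogonal spectral projectors $E_e(t)$ differentiable. Then for each $e$, $$\dot E_e=\sum_{f\neq e}\frac{\lambda_e+\lambda_f}{\lambda_f-\lambda_e}\big(E_e\Phi E_f+E_f\Phi E_e\big).$$ *)

From HB Require Import structures.
From mathcomp Require Import all_boot all_order all_algebra.
From mathcomp Require Import all_classical all_reals all_analysis.
Set Implicit Arguments. Unset Strict Implicit. Unset Printing Implicit Defensive.
Import Order.TTheory GRing.Theory Num.Theory.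
Import numFieldNormedType.Exports.
Local Open Scope ring_scope.

Definition orth_projector (R : realType) (n : nat) (P : 'M[R]_n) : Prop :=
  P^T = P /\ P *m P = P.

Definition spectral_decomposition (R : realType) (n k : nat) (A : 'M[R]_n)
    (lam : 'I_k -> R) (E : 'I_k -> 'M[R]_n) : Prop :=
  [/\ forall e f, e != f -> lam e != lam f,
      forall e, orth_projector (E e) /\ E e != 0,
      forall e f, e != f -> E e *m E f = 0,
      \sum_e E e = 1%:M
    & A = \sum_e lam e *: E e].

(* Write P = E_e and A = M Phi + Phi M, so that dM = -A. Differentiating P^2 = P shows
   that dP has no diagonal blocks: P dP P = 0 and (1 - P) dP (1 - P) = 0, hence
   dP = sum_(f <> e) (P dP E_f + E_f dP P). Differentiating M P = P M and sandwiching
   between P and E_f, using P M = lam_e P and M E_f = lam_f E_f, gives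
   (lam_e - lam_f) P dP E_f = -(lam_e + lam_f) P Phi E_f, and symmetrically for E_f dP P;
   the eigenvalues being distinct, each block can be solved for. *)

From HB Require Import structures.
From mathcomp Require Import all_boot all_order all_algebra.
From mathcomp Require Import all_classical all_reals all_analysis.
Import Order.TTheory GRing.Theory Num.Theory.
Import numFieldNormedType.Exports.
Local Open Scope ring_scope.

Section matrix_derivative.
Context {R : realFieldType} {V : normedModType R}.

Lemma is_derive_mxP {m n} (f : V -> 'M[R]_(m, n)) (t v : V) (D : 'M[R]_(m, n)) :
  is_derive t v f D <-> forall i j, is_derive t v (fun s => f s i j) (D i j).
Proof.
split=> [[df <-] i j | dfij].
  have dfij := (derivable_mxP f t v).1 df i j.
  by apply: DeriveDef => //; rewrite derive_mx // mxE.
have df : derivable f t v by apply/derivable_mxP => i j; case: (dfij i j).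
apply: DeriveDef => //; rewrite derive_mx //.
by apply/matrixP => i j; rewrite mxE derive_val.
Qed.

Lemma is_derive_mulmx {m n p} {f : V -> 'M[R]_(m, n)} {g : V -> 'M[R]_(n, p)}
    {t v : V} {df : 'M[R]_(m, n)} {dg : 'M[R]_(n, p)} :
  is_derive t v f df -> is_derive t v g dg ->
  is_derive t v (fun s => f s *m g s) (df *m g t + f t *m dg).
Proof.
move=> /is_derive_mxP dfij /is_derive_mxP dgij; apply/is_derive_mxP => i j.
have -> : (fun s => (f s *m g s) i j) = \sum_(l < n) (fun s => f s i l * g s l j).
  by apply/funext => s; rewrite mxE fct_sumE.
rewrite !mxE -big_split /=; apply: is_derive_sum => l.
apply: is_derive_eq (is_deriveM (dfij i l) (dgij l j)) _.
by rewrite addrC; congr (_ + _); exact: mulrC.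
Qed.

End matrix_derivative.

Section interval_derivative.
Context {R : realFieldType} {a b t : R}.
Hypothesis tab : t \in `]a, b[.

Lemma is_derive_eq0_itvoo {W : normedModType R} (h : R -> W) (D : W) :
  {in `]a, b[, forall s, h s = 0} -> is_derive t 1 h D -> D = 0.
Proof.
move=> h0 hD.
have h_near : \forall s \near t, h s = cst 0 s.
  by near=> s; apply: h0; near: s; exact: near_in_itvoo.
move: (near_eq_is_derive h_near hD) => {}hD.
by rewrite -[D]derive_val derive_cst.
Unshelve. all: by end_near. Qed.

Lemma is_derive_idempotent {n} {P : R -> 'M[R]_n} {dP : 'M[R]_n} :
  {in `]a, b[, forall s, P s *m P s = P s} -> is_derive t 1 P dP ->
  dP *m P t + P t *m dP = dP.
Proof.
move=> idem dP_t; apply/subr0_eq/(is_derive_eq0_itvoo (fun s => P s *m P s - P s)).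
  by move=> s sab; rewrite idem ?subrr.
exact: (is_deriveB (is_derive_mulmx dP_t dP_t) dP_t).
Qed.

Lemma is_derive_commute {n} {M P : R -> 'M[R]_n} {dM dP : 'M[R]_n} :
  {in `]a, b[, forall s, M s *m P s = P s *m M s} ->
  is_derive t 1 M dM -> is_derive t 1 P dP ->
  dM *m P t + M t *m dP = dP *m M t + P t *m dM.
Proof.
move=> comm dM_t dP_t.
apply/subr0_eq/(is_derive_eq0_itvoo (fun s => M s *m P s - P s *m M s)).
  by move=> s sab; rewrite comm ?subrr.
exact: (is_deriveB (is_derive_mulmx dM_t dP_t) (is_derive_mulmx dP_t dM_t)).
Qed.

End interval_derivative.

Lemma idempotent_derivative_split (R : pzRingType) (p dp : R) :
  p * p = p -> dp * p + p * dp = dp -> dp = p * dp * (1 - p) + (1 - p) * dp * p.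
Proof.
move=> pp dp_idem.
have pdpp : p * dp * p = 0.
  have : p * dp * p = p * (dp * p + p * dp) * p by rewrite dp_idem.
  rewrite mulrDr mulrDl !mulrA pp -!mulrA pp !mulrA.
  by move/(congr1 (fun x => x - p * dp * p)); rewrite subrr addrK.
by rewrite mulrBr mulr1 pdpp subr0 !mulrBl mul1r pdpp subr0 addrC dp_idem.
Qed.

Lemma scaler_div_eq (R : fieldType) (U : lmodType R) (c d : R) (x y : U) :
  c != 0 -> c *: x = d *: y -> x = (d / c) *: y.
Proof. by move=> c0 cxdy; rewrite mulrC -scalerA -cxdy scalerA mulVf ?scale1r. Qed.

Section eigen_sandwich.
Context {R : comPzRingType} {n : nat} {M P Q : 'M[R]_n} {l m : R} (X : 'M[R]_n).
Hypotheses (PM : P *m M = l *: P) (MQ : M *m Q = m *: Q).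

Lemma eigen_sandwich_commutator :
  P *m (M *m X - X *m M) *m Q = (l - m) *: (P *m X *m Q).
Proof.
rewrite mulmxBr mulmxBl scalerBl !mulmxA PM -!scalemxAl.
by rewrite -!mulmxA MQ !scalemxAr.
Qed.

Lemma eigen_sandwich_anticommutator :
  P *m (M *m X + X *m M) *m Q = (l + m) *: (P *m X *m Q).
Proof.
rewrite mulmxDr mulmxDl scalerDl !mulmxA PM -!scalemxAl.
by rewrite -!mulmxA MQ !scalemxAr.
Qed.

End eigen_sandwich.

Section gram_flow_blocks.
Context {R : fieldType} {n : nat} {M Phi P Q dP : 'M[R]_n} {l m : R}.
Hypotheses (lm : l != m) (PP : P *m P = P).
Hypotheses (PM : P *m M = l *: P) (MP : M *m P = l *: P).
Hypotheses (QM : Q *m M = m *: Q) (MQ : M *m Q = m *: Q).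
Hypotheses (PQ : P *m Q = 0) (QP : Q *m P = 0).
Let A := M *m Phi + Phi *m M.
Hypothesis dP_comm : (- A) *m P + M *m dP = dP *m M + P *m (- A).

Lemma gram_flow_commutator : M *m dP - dP *m M = A *m P - P *m A.
Proof.
move: dP_comm; rewrite mulNmx mulmxN => comm_deriv.
have -> : M *m dP = A *m P + (dP *m M - P *m A) by rewrite -comm_deriv addNKr.
by rewrite addrCA addrAC subrr add0r.
Qed.

Lemma gram_flow_block_right :
  P *m dP *m Q = ((l + m) / (m - l)) *: (P *m Phi *m Q).
Proof.
have := eigen_sandwich_commutator dP PM MQ.
rewrite gram_flow_commutator mulmxBr mulmxBl -!mulmxA PQ !mulmx0 sub0r !mulmxA PP.
rewrite /A (eigen_sandwich_anticommutator Phi PM MQ) -scaleNr.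
move=> /esym /(scaler_div_eq _) -> //; last by rewrite subr_eq0.
by rewrite -[m - l]opprB invrN mulrN mulNr.
Qed.

Lemma gram_flow_block_left :
  Q *m dP *m P = ((l + m) / (m - l)) *: (Q *m Phi *m P).
Proof.
have := eigen_sandwich_commutator dP QM MP.
rewrite gram_flow_commutator mulmxBr mulmxBl !mulmxA QP !mul0mx subr0 -!mulmxA PP.
rewrite !mulmxA /A (eigen_sandwich_anticommutator Phi QM MP) addrC.
by move=> /esym /(scaler_div_eq _) -> //; rewrite subr_eq0 eq_sym.
Qed.

End gram_flow_blocks.

Section spectral_decomposition.
Context {R : realType} {n k : nat} {M : 'M[R]_n} {lam : 'I_k -> R}.
Context {E : 'I_k -> 'M[R]_n}.
Hypothesis spec : spectral_decomposition M lam E.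

Lemma spectral_projector_idem g : E g *m E g = E g.
Proof. by have [_ proj _ _ _] := spec; case: (proj g) => -[]. Qed.

Lemma spectral_projector_orth f g : f != g -> E f *m E g = 0.
Proof. by have [_ _ orth _ _] := spec; apply: orth. Qed.

Lemma mulmx_spectral_projector g : M *m E g = lam g *: E g.
Proof.
have [_ _ orth _ ->] := spec; rewrite mulmx_suml (bigD1 g) //= big1 ?addr0.
  by rewrite -scalemxAl spectral_projector_idem.
by move=> f fg; rewrite -scalemxAl orth ?scaler0.
Qed.

Lemma spectral_projector_mulmx g : E g *m M = lam g *: E g.
Proof.
have [_ _ orth _ ->] := spec; rewrite mulmx_sumr (bigD1 g) //= big1 ?addr0.
  by rewrite -scalemxAr spectral_projector_idem.
by move=> f fg; rewrite -scalemxAr orth ?scaler0 // eq_sym.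
Qed.

Lemma spectral_projector_commute g : M *m E g = E g *m M.
Proof. by rewrite mulmx_spectral_projector spectral_projector_mulmx. Qed.

Lemma spectral_projector_compl e : 1%:M - E e = \sum_(f | f != e) E f.
Proof. by have [_ _ _ <- _] := spec; rewrite (bigD1 e) //= addrAC subrr add0r. Qed.

End spectral_decomposition.

Theorem corollary7 (R : realType) (n k : nat) (a b : R)
    (M Phi : R -> 'M[R]_n) (lam : R -> 'I_k -> R) (E : R -> 'I_k -> 'M[R]_n)
    (dE : R -> 'I_k -> 'M[R]_n) :
  (forall t, t \in `]a, b[ -> (M t)^T = M t) ->
  (forall t, t \in `]a, b[ -> (Phi t)^T = Phi t) ->
  (forall t, t \in `]a, b[ ->
     is_derive t 1 M (- (M t *m Phi t + Phi t *m M t))) ->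
  (forall t, t \in `]a, b[ -> spectral_decomposition (M t) (lam t) (E t)) ->
  (forall t e, t \in `]a, b[ -> is_derive t 1 (fun s => E s e) (dE t e)) ->
  forall t, t \in `]a, b[ -> forall e : 'I_k,
    dE t e = \sum_(f < k | f != e)
      ((lam t e + lam t f) / (lam t f - lam t e)) *:
        (E t e *m Phi t *m E t f + E t f *m Phi t *m E t e).
Proof.
move=> _ _ dM spec dE_deriv t tab e.
have sp := spec t tab; have [lam_inj _ _ _ _] := sp.
have PP := spectral_projector_idem sp e.
have dP_idem := is_derive_idempotent tab
  (fun s sab => spectral_projector_idem (spec s sab) e) (dE_deriv t e tab).
have dP_comm := is_derive_commute tab
  (fun s sab => spectral_projector_commute (spec s sab) e) (dM t tab) (dE_deriv t e tab).
have := @idempotent_derivative_split 'M[R]_n (E t e) (dE t e).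
rewrite -!mulmxE -idmxE => /(_ PP dP_idem) ->.
rewrite (spectral_projector_compl sp) mulmx_sumr !mulmx_suml -big_split /=.
apply: eq_bigr => f fe; have ef : e != f by rewrite eq_sym.
have [EM ME] := (spectral_projector_mulmx sp, mulmx_spectral_projector sp).
rewrite scalerDr; congr (_ + _).
  exact: (gram_flow_block_right (lam_inj _ _ ef) PP (EM e) (ME f)
            (spectral_projector_orth sp e f ef) dP_comm).
exact: (gram_flow_block_left (lam_inj _ _ ef) PP (ME e) (EM f)
          (spectral_projector_orth sp f e fe) dP_comm).
Qed.
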